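(* Let $X\subset \operatorname{int}(S^1\times[-1,1])$ be an annular continuum, and let $V$ and hairs be as defined in the context. Assume that there exists a sequence $\{\gamma_n\}_{n\ge1}$ of hairs of $V$ with $\min(\gamma_n)_1 \to -\infty$, and that for every sequence $\{\gamma_n\}_{n\ge 1}$ of hairs of $V$ with $\min(\gamma_n)_1\to-\infty$ one has $\max(\gamma_n)_1\to+\infty$. Then for every $R>1$ there exists $L'<0$ such that whenever $\gamma$ is a hair of $V+k$ for some integer $k\ge 0$ and $(\gamma(1))_1\le L'$, we have $R\in(\gamma)_1$.
   Context: $\pi\colon\mathbb{R}\times[-1,1]\to S^1\times[-1,1]$ is the universal cover, with deck transformation $T(x,y)=(x+1,y)$; for a set $S$ and $k\in\mathbb{Z}$, $S+k$ denotes $T^k(S)$. For a point or set $S$, $(S)_1$ denotes its image under the first-coordinate projection. An annular continuum $X\subset\operatorname{int}(S^1\times[-1,1])$ is a continuum whose complement consists of exactly two components, $U_-\supset S^1\times\{-1\}$ and $U_+\supset S^1\times\{1\}$. Let $\tilde X=\pi^{-1}(X)$, $\tilde U_+=\pi^{-1}(U_+)$. Let $\eta=\max\{y:(0,y)\in\tilde X\}$, $x_0=(0,\eta)$, $\beta$ the vertical segment from $(0,1)$ to $x_0$, and $\beta'=\beta\setminus\{x_0\}$. The arcs $\beta'$ and $\beta'+1$ bound a region in $\tilde U_+$ containing $(0,1)\times\{1\}$; $V$ is the closure of this region relative to $\tilde U_+$. A hair of $V$ is an arc $\gamma\colon[0,1]\to V$ with $\gamma(0)\in\mathbb{R}\times\{1\}$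 (identified with its image). An arc $\gamma$ is a hair of $V+k$ if $\gamma-k$ is a hair of $V$. (The paper phrases the hypothesis on $\gamma$ as ''$\gamma$ is a hair contained in $V^+=\bigcup_{j\ge 0}(V+j)$''.) *)

From HB Require Import structures.
From mathcomp Require Import all_boot all_order all_algebra.
From mathcomp Require Import all_classical all_reals all_analysis.
Set Implicit Arguments. Unset Strict Implicit. Unset Printing Implicit Defensive.
Import Order.TTheory GRing.Theory Num.Theory.
Import numFieldNormedType.Exports.
Local Open Scope classical_set_scope.
Local Open Scope ring_scope.

Section Annulus.
Variable R : realType.

(* the strip R x [-1,1] (universal cover of the closed annulus) *)
Definition strip : set (R * R) := [set p | -1 <= p.2 <= 1].

(* the closed annulus S^1 x [-1,1], realised concretely in the plane as
   {1 <= |z| <= 3} via the covering map (x,y) |-> (2+y) e^{2 pi i x} *)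
Definition cover (p : R * R) : R * R :=
  ((2 + p.2) * cos (2 * pi * p.1), (2 + p.2) * sin (2 * pi * p.1)).

Definition annulus : set (R * R) := cover @` strip.

Definition annulus_interior : set (R * R) := cover @` [set p | -1 < p.2 < 1].

Definition annular_continuum (X Um Up : set (R * R)) : Prop :=
  [/\ X `<=` annulus_interior, X !=set0, compact X & connected X] /\
  [/\ (exists2 a, (annulus `\` X) a & Um = connected_component (annulus `\` X) a),
      (exists2 b, (annulus `\` X) b & Up = connected_component (annulus `\` X) b),
      Um `&` Up = set0 /\ Um `|` Up = annulus `\` X,
      cover @` [set p | p.2 = -1] `<=` Um &
      cover @` [set p | p.2 = 1] `<=` Up].

Definition lift (A : set (R * R)) : set (R * R) := strip `&` cover @^-1` A.

(* S + k = T^k(S) with T(x,y) = (x+1,y) *)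
Definition shift (k : R) (S : set (R * R)) : set (R * R) :=
  [set p | S (p.1 - k, p.2)].

Definition is_eta (X : set (R * R)) (eta : R) : Prop :=
  lift X (0, eta) /\ forall y, lift X (0, y) -> y <= eta.

Definition beta' (eta : R) : set (R * R) := [set p | p.1 = 0 /\ eta < p.2 <= 1].

(* V: closure, relative to lift Up, of the region of lift Up bounded by
   beta' and beta'+1 containing (0,1) x {1} (i.e. the component of
   lift Up minus (beta' u (beta'+1)) containing (1/2,1)) *)
Definition Vset (Up : set (R * R)) (eta : R) : set (R * R) :=
  closure (connected_component
             (lift Up `\` (beta' eta `|` shift 1 (beta' eta))) (2^-1, 1))
  `&` lift Up.

Definition I01 : set R := [set t | 0 <= t <= 1].

Definition hair (V : set (R * R)) (g : R -> R * R) : Prop :=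
  [/\ {within I01, continuous g},
      (forall s t, I01 s -> I01 t -> g s = g t -> s = t),
      g @` I01 `<=` V &
      (g 0).2 = 1].

Definition hair_shift (V : set (R * R)) (k : nat) (g : R -> R * R) : Prop :=
  hair V (fun t => ((g t).1 - k%:R, (g t).2)).

Definition min1_to_minfty (gs : nat -> R -> R * R) : Prop :=
  forall M : R, exists N, forall n, (N <= n)%N ->
    exists2 t, I01 t & ((gs n t).1 <= M).

Definition max1_to_pinfty (gs : nat -> R -> R * R) : Prop :=
  forall M : R, exists N, forall n, (N <= n)%N ->
    exists2 t, I01 t & (M <= (gs n t).1).

End Annulus.

(** If the conclusion failed for some [r], there would be hairs of
    translates [V + k_n] whose endpoints have first coordinate at most [-n] but whose
    projections miss [r]. Translating them by [-k_n] gives hairs of [V] whose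
    projections are unbounded below, so by hypothesis they are eventually unbounded above:
    some translated-back hair reaches [r], hence so does the original hair, which lies
    [k_n >= 0] further to the right. As its endpoint lies to the left of [r], the
    intermediate value theorem makes its projection take the value [r]. *)

From HB Require Import structures.
From mathcomp Require Import all_boot all_order all_algebra.
From mathcomp Require Import all_classical all_reals all_analysis.
From mathcomp Require Import lra.
Set Implicit Arguments. Unset Strict Implicit. Unset Printing Implicit Defensive.
Import Order.TTheory GRing.Theory Num.Theory.
Import numFieldNormedType.Exports.
Local Open Scope classical_set_scope.
Local Open Scope ring_scope.

Section Hairs.
Variable R : realType.
Implicit Types (V : set (R * R)) (g : R -> R * R) (gs : nat -> R -> R * R).

Definition shift_path (k : nat) g : R -> R * R := fun t => ((g t).1 - k%:R, (g t).2).

Lemma continuous_within_fst (A : set R) g :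
  {within A, continuous g} -> {within A, continuous (fun t => (g t).1)}.
Proof. by move=> cg x; apply: continuous_comp (cg x) _; exact: cvg_fst. Qed.

Lemma hair_fst_continuous V g : hair V g -> {within @I01 R, continuous (fun t => (g t).1)}.
Proof. by case=> cg _ _ _; exact: continuous_within_fst. Qed.

Lemma I01_itv (a t : R) : 0 <= a -> t \in `[a, 1] -> I01 t.
Proof. by move=> a0; rewrite in_itv /= => /andP[a_t t1]; apply/andP; split=> //; lra. Qed.

Lemma IVT_I01 (f : R -> R) (t v : R) :
  {within @I01 R, continuous f} -> I01 t -> f 1 <= v <= f t ->
  exists2 c, I01 c & f c = v.
Proof.
move=> cf /andP[t0 t1] /andP[f1v vft].
have cf' : {within `[t, 1], continuous f}.
  by apply: continuous_subspaceW cf => x; exact: I01_itv.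
have v_between : Num.min (f t) (f 1) <= v <= Num.max (f t) (f 1).
  by rewrite ge_min le_max f1v vft orbT.
have [c ct fc] := IVT t1 cf' v_between.
by exists c => //; exact: I01_itv ct.
Qed.

Lemma endpoint_min1_to_minfty gs :
  (forall n, (gs n 1).1 <= - n%:R) -> min1_to_minfty gs.
Proof.
move=> end_le M; exists (Num.truncn (- M)).+1 => n Nn.
exists 1; first by rewrite /I01 /= ler01 lexx.
have Mlt := truncnS_gt (- M).
have : (Num.truncn (- M)).+1%:R <= n%:R :> R by rewrite ler_nat.
have := end_le n; lra.
Qed.

Lemma shift_path_fst_le k g t : (shift_path k g t).1 <= (g t).1.
Proof. by rewrite /= lerBlDr lerDl. Qed.

End Hairs.

Theorem lemma5 (R : realType) (X Um Up : set (R * R)) (eta : R) :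
  annular_continuum X Um Up ->
  is_eta X eta ->
  (exists gs : nat -> R -> R * R,
      (forall n, hair (Vset Up eta) (gs n)) /\ min1_to_minfty gs) ->
  (forall gs : nat -> R -> R * R,
      (forall n, hair (Vset Up eta) (gs n)) ->
      min1_to_minfty gs -> max1_to_pinfty gs) ->
  forall r : R, 1 < r ->
  exists2 L' : R, L' < 0 &
    forall (k : nat) (g : R -> R * R),
      hair_shift (Vset Up eta) k g ->
      (g 1).1 <= L' ->
      exists2 t, I01 t & (g t).1 = r.
Proof.
move=> _ _ _ unbounded r r_gt1; apply: contrapT => no_L.
have bad n : exists kg : nat * (R -> R * R),
    [/\ hair_shift (Vset Up eta) kg.1 kg.2, (kg.2 1).1 <= - n.+1%:R &
        ~ exists2 t, I01 t & (kg.2 t).1 = r].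
  apply: contrapT => none; apply: no_L; exists (- n.+1%:R); first by rewrite oppr_lt0.
  by move=> k g hg g1; apply: contrapT => miss; apply: none; exists (k, g).
have [kg /all_and3[hairs end_le misses]] := choice bad.
pose gs n := shift_path (kg n).1 (kg n).2.
have gs_min : min1_to_minfty gs.
  apply: endpoint_min1_to_minfty => n; apply: le_trans (shift_path_fst_le _ _ _) _.
  by apply: le_trans (end_le n) _; rewrite lerN2 ler_nat.
have [N /(_ N (leqnn N))[t t01 r_le]] := unbounded gs hairs gs_min r.
have r_between : (gs N 1).1 <= r - (kg N).1%:R <= (gs N t).1.
  apply/andP; split; last by apply: le_trans r_le; rewrite lerBlDr lerDl.
  rewrite /= lerD2r; apply: le_trans (end_le N) _.
  by rewrite -natr1 opprD; have := ler0n R N; lra.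
have [c c01 gc] := IVT_I01 (hair_fst_continuous (hairs N)) t01 r_between.
by apply: (misses N); exists c => //; move: gc => /=; lra.
Qed.
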